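(* Let $\mathbf{u}=(u_n)$ be an a-sequence. Then $\{x\in\mathbb{T}: \mathrm{supp}_\mathbf{u}(x)\text{ is finite}\}=t(s_\mathbf{u}(\mathbb{T}))$, the torsion subgroup of $s_\mathbf{u}(\mathbb{T})$.
   Context: An a-sequence is a strictly increasing sequence of integers $\mathbf{u}=(u_n)_{n\in\mathbb{N}}$ with $u_n\mid u_{n+1}$ for all $n$; ratios $q_0=u_0$, $q_n=u_n/u_{n-1}$. $\mathbb{T}=\mathbb{R}/\mathbb{Z}$, and each $x\in\mathbb{T}$ is identified with its representative in $[0,1)$. $s_\mathbf{u}(\mathbb{T})=\{x\in\mathbb{T}: u_nx\to0\text{ in }\mathbb{T}\}$. Canonical representation: for $x\in[0,1)$ there is a unique integer sequence $(c_n)_{n\ge1}$ with $0\le c_n<q_n$ for all $n$, $c_n<q_n-1$ for infinitely many $n$, and $x=\sum_{n\ge1}c_n/u_n$. Then $\mathrm{supp}_\mathbf{u}(x)=\{n: c_n\ne0\}$. *)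

From Stdlib Require Import Reals Lra Lia Arith.
Open Scope R_scope.

(* An a-sequence: strictly increasing, u n divides u (n+1).
   (Positivity is automatic on nat: u 0 = 0 would force u 1 = 0.) *)
Definition a_sequence (u : nat -> nat) : Prop :=
  forall n : nat, (u n < u (S n))%nat /\ Nat.divide (u n) (u (S n)).

(* ratios: q_0 = u_0, q_n = u_n / u_{n-1} (exact division) *)
Definition ratio (u : nat -> nat) (n : nat) : nat :=
  match n with
  | O => u O
  | S m => (u (S m) / u m)%nat
  end.

(* c is the canonical representation of x (c 0 is irrelevant, indices n >= 1):
   0 <= c_n < q_n, c_n < q_n - 1 infinitely often, x = sum_{n>=1} c_n/u_n. *)
Definition canonical_rep (u : nat -> nat) (x : R) (c : nat -> nat) : Prop :=
  (forall n : nat, (1 <= n)%nat -> (c n < ratio u n)%nat) /\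
  (forall N : nat, exists n : nat, (N <= n)%nat /\ (1 <= n)%nat /\
       (c n < ratio u n - 1)%nat) /\
  infinite_sum (fun k : nat => INR (c (S k)) / INR (u (S k))) x.

Definition finite_support (c : nat -> nat) : Prop :=
  exists N : nat, forall n : nat, (N <= n)%nat -> c n = 0%nat.

(* u_n x -> 0 in T = R/Z *)
Definition in_s_u (u : nat -> nat) (x : R) : Prop :=
  forall eps : R, 0 < eps -> exists N : nat, forall n : nat, (N <= n)%nat ->
    exists z : Z, Rabs (INR (u n) * x - IZR z) < eps.

Definition torsion_T (x : R) : Prop :=
  exists k : nat, (0 < k)%nat /\ exists z : Z, INR k * x = IZR z.

From Stdlib Require Import Reals Lra Lia Arith ZArith.
Open Scope R_scope.

(* If supp(x) is finite then x = sum_{n <= N} c_n / u_n, so u_M x is an integer for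
   all M >= N, since u_n | u_M: hence u_M x -> 0 and x is torsion.  Conversely, if
   k x is an integer and u_N x is within 1/k of an integer b, then k (u_N x - b) is an
   integer of absolute value < 1, so u_N x = b and x = w / u_N with 0 <= w < u_N.  The
   digits of such an x are c_n = (w u_n / u_N) mod q_n, and they vanish for n > N,
   because w u_n / u_N is then the exact multiple (w u_{n-1} / u_N) q_n. *)

Lemma infinite_sum_eventually_const (f : nat -> R) (N : nat) (l : R) :
  (forall n, (N <= n)%nat -> sum_f_R0 f n = l) -> infinite_sum f l.
Proof.
  intros Hf eps Heps. exists N. intros n Hn.
  unfold R_dist. rewrite Hf by lia. rewrite Rminus_diag, Rabs_R0. lra.
Qed.

Lemma sum_f_R0_eventually_zero (f : nat -> R) (N : nat) :
  (forall k, (N <= k)%nat -> f k = 0) ->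
  forall n, (N <= n)%nat -> sum_f_R0 f n = sum_f_R0 f N.
Proof.
  intros Hf n. induction n as [|n IH]; intros Hn.
  - replace N with 0%nat by lia. reflexivity.
  - destruct (Nat.eq_dec N (S n)) as [->|HN]; [reflexivity|].
    simpl. rewrite IH, Hf by lia. lra.
Qed.

Lemma infinite_sum_eventually_zero (f : nat -> R) (N : nat) (l : R) :
  (forall k, (N <= k)%nat -> f k = 0) -> infinite_sum f l -> l = sum_f_R0 f N.
Proof.
  intros Hf Hl. apply (uniqueness_sum f); [exact Hl|].
  apply infinite_sum_eventually_const with N.
  now apply sum_f_R0_eventually_zero.
Qed.

Lemma IZR_Rabs_lt_1 (m : Z) : Rabs (IZR m) < 1 -> m = 0%Z.
Proof.
  intros Hm. apply Rabs_def2 in Hm as [Hlt Hgt].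
  assert (m < 1)%Z by (apply lt_IZR; exact Hlt).
  assert (-1 < m)%Z by (apply lt_IZR; simpl; lra).
  lia.
Qed.

Lemma near_integer_of_torsion (k a : nat) (z b : Z) (x : R) :
  (0 < k)%nat -> INR k * x = IZR z ->
  Rabs (INR a * x - IZR b) < / INR k -> INR a * x = IZR b.
Proof.
  intros Hk Hz Hab.
  assert (HkR : 0 < INR k) by (apply lt_0_INR; lia).
  set (m := (Z.of_nat a * z - Z.of_nat k * b)%Z).
  assert (Hm : IZR m = INR k * (INR a * x - IZR b)).
  { unfold m. rewrite minus_IZR, !mult_IZR, <- !INR_IZR_INZ, <- Hz. ring. }
  assert (Hm0 : m = 0%Z).
  { apply IZR_Rabs_lt_1. rewrite Hm, Rabs_mult, Rabs_right by lra.
    apply Rmult_lt_reg_l with (/ INR k); [now apply Rinv_0_lt_compat|].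
    rewrite <- Rmult_assoc, Rinv_l, Rmult_1_l, Rmult_1_r by lra. exact Hab. }
  rewrite Hm0 in Hm. symmetry in Hm.
  apply Rmult_integral in Hm as [H|H]; lra.
Qed.

Lemma in_s_u_of_eventually_integral (u : nat -> nat) (x : R) (N : nat) :
  (forall M, (N <= M)%nat -> exists z : nat, INR (u M) * x = INR z) -> in_s_u u x.
Proof.
  intros Hint eps Heps. exists N. intros n Hn.
  destruct (Hint n Hn) as [z Hz]. exists (Z.of_nat z).
  rewrite <- INR_IZR_INZ, Hz, Rminus_diag, Rabs_R0. exact Heps.
Qed.

Lemma in_s_u_torsion_integral (u : nat -> nat) (x : R) :
  in_s_u u x -> torsion_T x -> exists N (b : Z), INR (u N) * x = IZR b.
Proof.
  intros Hs [k [Hk [z Hz]]].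
  assert (HkR : 0 < INR k) by (apply lt_0_INR; lia).
  destruct (Hs (/ INR k) (Rinv_0_lt_compat _ HkR)) as [N HN].
  destruct (HN N (le_n N)) as [b Hb].
  exists N, b. exact (near_integer_of_torsion k (u N) z b x Hk Hz Hb).
Qed.

Section ASequence.

Variable u : nat -> nat.
Hypothesis hu : a_sequence u.
Hypothesis hu0 : u O = 1%nat.

Lemma a_sequence_pos (n : nat) : (0 < u n)%nat.
Proof. induction n as [|n IH]; [rewrite hu0; lia | destruct (hu n); lia]. Qed.

Lemma INR_a_sequence_pos (n : nat) : 0 < INR (u n).
Proof. apply lt_0_INR, a_sequence_pos. Qed.

Lemma ratio_mul (n : nat) : (ratio u (S n) * u n = u (S n))%nat.
Proof.
  destruct (hu n) as [_ [k Hk]]. pose proof (a_sequence_pos n).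
  simpl. rewrite Hk, Nat.div_mul; lia.
Qed.

Lemma ratio_ge_2 (n : nat) : (2 <= ratio u (S n))%nat.
Proof.
  destruct (hu n) as [Hlt _]. pose proof (a_sequence_pos n).
  rewrite <- ratio_mul in Hlt. nia.
Qed.

Lemma a_sequence_divide (n m : nat) : (n <= m)%nat -> Nat.divide (u n) (u m).
Proof.
  induction m as [|m IH]; intros Hnm.
  - replace n with 0%nat by lia. apply Nat.divide_refl.
  - destruct (Nat.eq_dec n (S m)) as [->|Hn]; [apply Nat.divide_refl|].
    apply Nat.divide_trans with (u m); [apply IH; lia | apply (hu m)].
Qed.

Lemma mul_u_partial_sum_integral (c : nat -> nat) (m M : nat) :
  (S m <= M)%nat ->
  exists z : nat,
    INR (u M) * sum_f_R0 (fun k => INR (c (S k)) / INR (u (S k))) m = INR z.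
Proof.
  assert (Hterm : forall j, (j <= M)%nat ->
             exists z : nat, INR (u M) * (INR (c j) / INR (u j)) = INR z).
  { intros j Hj. destruct (a_sequence_divide j M Hj) as [r Hr].
    exists (c j * r)%nat. pose proof (INR_a_sequence_pos j).
    rewrite Hr, !mult_INR. field. lra. }
  induction m as [|m IH]; intros Hm.
  - apply Hterm. lia.
  - destruct (IH ltac:(lia)) as [z1 Hz1]. destruct (Hterm (S (S m)) Hm) as [z2 Hz2].
    exists (z1 + z2)%nat. simpl. rewrite plus_INR, <- Hz1, <- Hz2. ring.
Qed.

Lemma finite_support_eventually_integral (c : nat -> nat) (x : R) :
  infinite_sum (fun k => INR (c (S k)) / INR (u (S k))) x -> finite_support c ->
  exists N, forall M, (N <= M)%nat -> exists z : nat, INR (u M) * x = INR z.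
Proof.
  intros Hsum [N HN]. exists (S N). intros M HM.
  assert (Htail : forall k, (N <= k)%nat -> INR (c (S k)) / INR (u (S k)) = 0).
  { intros k Hk. rewrite HN by lia. simpl. lra. }
  rewrite (infinite_sum_eventually_zero _ N x Htail Hsum).
  now apply mul_u_partial_sum_integral.
Qed.

Lemma integral_mul_u_fraction (x : R) (N : nat) (b : Z) :
  0 <= x -> x < 1 -> INR (u N) * x = IZR b ->
  exists w : nat, (w < u N)%nat /\ x = INR w / INR (u N).
Proof.
  intros Hx0 Hx1 Hb. pose proof (INR_a_sequence_pos N) as HuN.
  assert (Hb0 : (0 <= b)%Z) by (apply le_IZR; rewrite <- Hb; nra).
  assert (Hb1 : (b < Z.of_nat (u N))%Z)
    by (apply lt_IZR; rewrite <- Hb, <- INR_IZR_INZ; nra).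
  exists (Z.to_nat b). split; [lia|].
  rewrite INR_IZR_INZ, Z2Nat.id, <- Hb by exact Hb0. field. lra.
Qed.

Section Digits.

Variables w N : nat.
Hypothesis hw : (w < u N)%nat.

(* [numer n / u n] is [x = w / u N] truncated to n digits. *)
Definition numer (n : nat) : nat := (w * u n / u N)%nat.

Definition digit (n : nat) : nat := (numer n mod ratio u n)%nat.

Lemma numer_0 : numer 0 = 0%nat.
Proof. unfold numer. rewrite hu0, Nat.mul_1_r. now apply Nat.div_small. Qed.

Lemma numer_succ (n : nat) : numer (S n) = (numer n * ratio u (S n) + digit (S n))%nat.
Proof.
  pose proof (ratio_ge_2 n). pose proof (a_sequence_pos N).
  unfold digit. rewrite (Nat.div_mod (numer (S n)) (ratio u (S n))) at 1 by lia.
  rewrite (Nat.mul_comm (ratio u (S n))). f_equal. f_equal.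
  unfold numer. rewrite Nat.Div0.div_div, <- ratio_mul.
  replace (w * (ratio u (S n) * u n))%nat with (w * u n * ratio u (S n))%nat by ring.
  apply Nat.Div0.div_mul_cancel_r. lia.
Qed.

Lemma numer_eventually (n : nat) :
  (N <= n)%nat -> exists r, u n = (r * u N)%nat /\ numer n = (w * r)%nat.
Proof.
  intros Hn. destruct (a_sequence_divide N n Hn) as [r Hr]. exists r.
  split; [exact Hr|]. pose proof (a_sequence_pos N).
  unfold numer. rewrite Hr, Nat.mul_assoc, Nat.div_mul; lia.
Qed.

Lemma numer_div_u_eventually (n : nat) :
  (N <= n)%nat -> INR (numer n) / INR (u n) = INR w / INR (u N).
Proof.
  intros Hn. destruct (numer_eventually n Hn) as [r [Hr ->]].
  pose proof (INR_a_sequence_pos n) as Hun. pose proof (INR_a_sequence_pos N).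
  rewrite Hr, mult_INR in Hun |- *. rewrite mult_INR.
  assert (INR r <> 0) by (intro H0; rewrite H0 in Hun; lra).
  field. split; lra.
Qed.

Lemma digit_eventually_0 (n : nat) : (N <= n)%nat -> digit (S n) = 0%nat.
Proof.
  intros Hn. unfold digit.
  destruct (numer_eventually n Hn) as [r [Hr _]].
  destruct (numer_eventually (S n) ltac:(lia)) as [r' [Hr' ->]].
  pose proof (a_sequence_pos N).
  assert (r' = ratio u (S n) * r)%nat.
  { apply Nat.mul_cancel_r with (u N); [lia|].
    rewrite <- Hr', <- ratio_mul, Hr. ring. }
  subst r'. replace (w * (ratio u (S n) * r))%nat with (w * r * ratio u (S n))%nat by ring.
  apply Nat.Div0.mod_mul.
Qed.

Lemma digit_partial_sum (n : nat) :
  sum_f_R0 (fun k => INR (digit (S k)) / INR (u (S k))) n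
  = INR (numer (S n)) / INR (u (S n)).
Proof.
  induction n as [|n IH].
  - simpl. rewrite numer_succ, numer_0. reflexivity.
  - simpl sum_f_R0. rewrite IH, (numer_succ (S n)), <- (ratio_mul (S n)).
    pose proof (INR_a_sequence_pos (S n)).
    assert (0 < INR (ratio u (S (S n)))) by (apply lt_0_INR; pose proof (ratio_ge_2 (S n)); lia).
    rewrite plus_INR, !mult_INR. field. split; lra.
Qed.

Lemma fraction_canonical_rep :
  canonical_rep u (INR w / INR (u N)) digit /\ finite_support digit.
Proof.
  split; [split; [|split]|].
  - intros [|n] Hn; [lia|]. apply Nat.mod_upper_bound.
    pose proof (ratio_ge_2 n). lia.
  - intros M. exists (S (N + M)). rewrite digit_eventually_0 by lia.
    pose proof (ratio_ge_2 (N + M)). lia.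
  - apply infinite_sum_eventually_const with N. intros n Hn.
    rewrite digit_partial_sum. apply numer_div_u_eventually. lia.
  - exists (S N). intros [|n] Hn; [lia|]. apply digit_eventually_0. lia.
Qed.

End Digits.

End ASequence.

Theorem mainTheorem7 (u : nat -> nat) (hu : a_sequence u) (hu0 : u O = 1%nat)
  (x : R) (hx0 : 0 <= x) (hx1 : x < 1) :
  (exists c : nat -> nat, canonical_rep u x c /\ finite_support c)
  <-> (in_s_u u x /\ torsion_T x).
Proof.
  split.
  - intros [c [[_ [_ Hsum]] Hfin]].
    destruct (finite_support_eventually_integral u hu hu0 c x Hsum Hfin) as [N Hint].
    split; [exact (in_s_u_of_eventually_integral u x N Hint)|].
    destruct (Hint N (le_n N)) as [z Hz].
    exists (u N). split; [exact (a_sequence_pos u hu hu0 N)|].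
    exists (Z.of_nat z). now rewrite <- INR_IZR_INZ.
  - intros [Hs Htor].
    destruct (in_s_u_torsion_integral u x Hs Htor) as [N [b Hb]].
    destruct (integral_mul_u_fraction u hu hu0 x N b hx0 hx1 Hb) as [w [Hw ->]].
    exists (digit u w N). exact (fraction_canonical_rep u hu hu0 w N Hw).
Qed.
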